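(* Let $C$ be an octonion algebra over a field $k$ with $\mathrm{char}(k)\neq2$, and $G=\mathrm{Aut}(C)$. Let $s,t\in G(k)$ be elements of order $2$, and let $D$ (resp. $D'$) be the quaternion subalgebra of $C$ fixed elementwise by $t$ (resp. $s$). Then $s$ and $t$ are conjugate in $G(k)$ if and only if $D\cong D'$ as $k$-algebras.
   Context: An octonion algebra is an $8$-dimensional composition algebra, i.e. a unital $k$-algebra with a nondegenerate multiplicative quadratic form $N$. A quaternion subalgebra is a $4$-dimensional composition subalgebra containing the identity. Every element of order $2$ in $\mathrm{Aut}(C)$ fixes elementwise exactly a quaternion subalgebra $D$ (its $+1$-eigenspace) and acts by $-1$ on $D^\perp$. *)

From HB Require Import structures.
From mathcomp Require Import all_boot all_order all_algebra.
Set Implicit Arguments. Unset Strict Implicit. Unset Printing Implicit Defensive.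
Import Order.TTheory GRing.Theory Num.Theory.
Local Open Scope ring_scope.

Section Octonions.
Variables (k : fieldType) (V : vectType k).

Definition bilinear_mul (mul : V -> V -> V) : Prop :=
  (forall (a : k) x y z, mul (a *: x + y) z = a *: mul x z + mul y z) /\
  (forall (a : k) x y z, mul z (a *: x + y) = a *: mul z x + mul z y).

Definition polar (N : V -> k) (x y : V) : k := N (x + y) - N x - N y.

Definition quadratic_form (N : V -> k) : Prop :=
  (forall (a : k) x, N (a *: x) = a ^+ 2 * N x) /\
  (forall (a : k) x y z, polar N (a *: x + y) z = a * polar N x z + polar N y z).

Definition nondegenerate (N : V -> k) : Prop :=
  forall x, (forall y, polar N x y = 0) -> x = 0.

Definition composition_algebra (mul : V -> V -> V) (e : V) (N : V -> k) : Prop :=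
  [/\ bilinear_mul mul,
      (forall x, mul e x = x /\ mul x e = x),
      quadratic_form N,
      nondegenerate N &
      (forall x y, N (mul x y) = N x * N y)].

Definition octonion_algebra (mul : V -> V -> V) (e : V) (N : V -> k) : Prop :=
  composition_algebra mul e N /\ \dim (fullv : {vspace V}) = 8%N.

Definition is_aut (mul : V -> V -> V) (f : 'End(V)) : Prop :=
  bijective (fun_of_lfun f) /\ (forall x y, f (mul x y) = mul (f x) (f y)).

Definition aut_order2 (mul : V -> V -> V) (f : 'End(V)) : Prop :=
  is_aut mul f /\ (f \o f = \1)%VF /\ f != \1%VF.

Definition conj_in_Aut (mul : V -> V -> V) (s t : 'End(V)) : Prop :=
  exists g : 'End(V), is_aut mul g /\ (s \o g = g \o t)%VF.

(* The subalgebras D and D' (sub-vector spaces closed under mul, containing e)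
   are isomorphic as k-algebras: there is a k-linear map D -> D' (restriction
   of a linear endomorphism of V) that is bijective onto D', multiplicative
   and unital. *)
Definition alg_iso (mul : V -> V -> V) (e : V) (D D' : {vspace V}) : Prop :=
  exists g : 'End(V),
    [/\ (g @: D)%VS = D',
        (forall x, x \in D -> g x = 0 -> x = 0),
        (forall x y, x \in D -> y \in D -> g (mul x y) = mul (g x) (g y)) &
        g e = e].

End Octonions.

From Pilot Require Import Defs.
From HB Require Import structures.
From mathcomp Require Import all_boot all_order all_algebra.
From mathcomp Require Import ring.
From Stdlib Require Import Classical.
Import GRing.Theory.
Local Open Scope ring_scope.

(* Let D = Fix(t) and D' = Fix(s).  If s = g t g^-1 then g restricts to an
   algebra isomorphism D ~ D'.  Conversely, let phi : D ~ D' be an algebra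
   isomorphism. *)

Section CompositionAlgebra.
Context {k : fieldType} {V : vectType k} {mul : V -> V -> V} {e : V} {N : V -> k}.
Hypothesis two_neq0 : (2%:R : k) != 0.
Hypothesis mul_bilinear : bilinear_mul mul.
Hypothesis mul_unit : forall x, mul e x = x /\ mul x e = x.
Hypothesis N_quadratic : quadratic_form N.
Hypothesis N_nondeg : Defs.nondegenerate N.
Hypothesis N_mul : forall x y, N (mul x y) = N x * N y.
Hypothesis V_nontrivial : exists x : V, x != 0.

Local Notation pol := (polar N).

Lemma cmulZDl a x y z : mul (a *: x + y) z = a *: mul x z + mul y z.
Proof. by case: mul_bilinear. Qed.
Lemma cmulZDr a x y z : mul z (a *: x + y) = a *: mul z x + mul z y.
Proof. by case: mul_bilinear. Qed.

Lemma double_eq0 (x : V) : x = x + x -> x = 0.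
Proof. by move/(congr1 (fun v => v - x)); rewrite addrK subrr => ->. Qed.

Lemma cmul0l z : mul 0 z = 0.
Proof. by apply: double_eq0; have := cmulZDl 1 0 0 z; rewrite !scale1r addr0. Qed.
Lemma cmul0r z : mul z 0 = 0.
Proof. by apply: double_eq0; have := cmulZDr 1 0 0 z; rewrite !scale1r addr0. Qed.
Lemma cmulDl x y z : mul (x + y) z = mul x z + mul y z.
Proof. by have := cmulZDl 1 x y z; rewrite !scale1r. Qed.
Lemma cmulDr x y z : mul z (x + y) = mul z x + mul z y.
Proof. by have := cmulZDr 1 x y z; rewrite !scale1r. Qed.
Lemma cmulZl a x z : mul (a *: x) z = a *: mul x z.
Proof. by have := cmulZDl a x 0 z; rewrite cmul0l !addr0. Qed.
Lemma cmulZr a x z : mul z (a *: x) = a *: mul z x.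
Proof. by have := cmulZDr a x 0 z; rewrite cmul0r !addr0. Qed.
Lemma cmulNl x z : mul (- x) z = - mul x z.
Proof. by rewrite -scaleN1r cmulZl scaleN1r. Qed.
Lemma cmulNr x z : mul z (- x) = - mul z x.
Proof. by rewrite -scaleN1r cmulZr scaleN1r. Qed.
Lemma cmulBl x y z : mul (x - y) z = mul x z - mul y z.
Proof. by rewrite cmulDl cmulNl. Qed.
Lemma cmulBr x y z : mul z (x - y) = mul z x - mul z y.
Proof. by rewrite cmulDr cmulNr. Qed.

Lemma cmul1l x : mul e x = x. Proof. by case: (mul_unit x). Qed.
Lemma cmul1r x : mul x e = x. Proof. by case: (mul_unit x). Qed.

Lemma normZ a x : N (a *: x) = a ^+ 2 * N x.
Proof. by case: N_quadratic. Qed.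
Lemma norm0 : N 0 = 0.
Proof. by rewrite -(scale0r 0) normZ expr0n mul0r. Qed.
Lemma normN x : N (- x) = N x.
Proof. by rewrite -scaleN1r normZ sqrrN expr1n mul1r. Qed.
Lemma normD x y : N (x + y) = N x + N y + pol x y.
Proof. rewrite /polar; ring. Qed.

Lemma polarC x y : pol x y = pol y x.
Proof. rewrite /polar (addrC x y); ring. Qed.
Lemma polarZDl a x y z : pol (a *: x + y) z = a * pol x z + pol y z.
Proof. by case: N_quadratic. Qed.
Lemma polar0l z : pol 0 z = 0.
Proof. by rewrite /polar add0r norm0 subr0 subrr. Qed.
Lemma polar0r z : pol z 0 = 0.
Proof. by rewrite polarC polar0l. Qed.
Lemma polarDl x y z : pol (x + y) z = pol x z + pol y z.
Proof. by have := polarZDl 1 x y z; rewrite scale1r mul1r. Qed.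
Lemma polarZl a x z : pol (a *: x) z = a * pol x z.
Proof. by have := polarZDl a x 0 z; rewrite polar0l !addr0. Qed.
Lemma polarNl x z : pol (- x) z = - pol x z.
Proof. by rewrite -scaleN1r polarZl mulN1r. Qed.
Lemma polarBl x y z : pol (x - y) z = pol x z - pol y z.
Proof. by rewrite polarDl polarNl. Qed.
Lemma polarDr x y z : pol z (x + y) = pol z x + pol z y.
Proof. by rewrite polarC polarDl !(polarC z). Qed.
Lemma polarZr a x z : pol z (a *: x) = a * pol z x.
Proof. by rewrite polarC polarZl polarC. Qed.
Lemma polarNr x z : pol z (- x) = - pol z x.
Proof. by rewrite polarC polarNl polarC. Qed.
Lemma polarBr x y z : pol z (x - y) = pol z x - pol z y.
Proof. by rewrite polarDr polarNr. Qed.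
Lemma polarxx x : pol x x = 2%:R * N x.
Proof.
rewrite /polar; have -> : x + x = 2%:R *: x by rewrite scaler_nat mulr2n.
rewrite normZ; ring.
Qed.

Ltac expand_bilinear := rewrite ?(cmulDl, cmulDr, cmulBl, cmulBr, cmulZl, cmulZr,
  cmulNl, cmulNr, polarDl, polarBl, polarZl, polarNl, polarDr, polarBr,
  polarZr, polarNr, polar0l, polar0r, cmul0l, cmul0r).

Lemma eq_by_combination (L R F G c : k) : L - R = c * (F - G) -> F = G -> L = R.
Proof. by move=> h hFG; apply/eqP; rewrite -subr_eq0 h hFG subrr mulr0. Qed.
Lemma eq_by_combination2 (L R F1 G1 F2 G2 c1 c2 : k) :
  L - R = c1 * (F1 - G1) + c2 * (F2 - G2) -> F1 = G1 -> F2 = G2 -> L = R.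
Proof. by move=> h h1 h2; apply/eqP; rewrite -subr_eq0 h h1 h2 !subrr !mulr0 addr0. Qed.

Lemma polar_inj x y : (forall z, pol x z = pol y z) -> x = y.
Proof.
move=> h; apply/eqP; rewrite -subr_eq0; apply/eqP; apply: N_nondeg => z.
by rewrite polarBl h subrr.
Qed.

Lemma norm_e : N e = 1.
Proof.
have h : N e * (N e - 1) = 0 by rewrite mulrBr mulr1 -N_mul cmul1l subrr.
move/eqP: h; rewrite mulf_eq0 subr_eq0 => /orP [/eqP Ne0|/eqP //].
case: V_nontrivial => x /eqP; case; apply: N_nondeg => y.
have N_eq0 v : N v = 0 by rewrite -(cmul1l v) N_mul Ne0 mul0r.
by rewrite /polar !N_eq0 !subr0.
Qed.

Lemma e_neq0 : e != 0.
Proof. by apply/eqP => h; have := norm_e; rewrite h norm0 => /eqP; rewrite eq_sym oner_eq0. Qed.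

Lemma polar_ee : pol e e = 2%:R. Proof. by rewrite polarxx norm_e mulr1. Qed.

Lemma polar_mull x y z : pol (mul x y) (mul x z) = N x * pol y z.
Proof. rewrite /polar -cmulDr !N_mul; ring. Qed.
Lemma polar_mulr x y z : pol (mul y x) (mul z x) = pol y z * N x.
Proof. rewrite /polar -cmulDl !N_mul; ring. Qed.

Lemma polar_mull_lin x y w z :
  pol (mul x y) (mul w z) + pol (mul w y) (mul x z) = pol x w * pol y z.
Proof.
have h := polar_mull (x + w) y z.
rewrite !(cmulDl, polarDl, polarDr) !polar_mull normD in h.
apply: (@eq_by_combination _ _ _ _ 1 _ h); rewrite (polarC (mul w y) (mul x z)); ring.
Qed.
Lemma polar_mulr_lin x y w z :
  pol (mul y x) (mul z w) + pol (mul y w) (mul z x) = pol y z * pol x w.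
Proof.
have h := polar_mulr (x + w) y z.
rewrite !(cmulDr, polarDl, polarDr) !polar_mulr normD in h.
apply: (@eq_by_combination _ _ _ _ 1 _ h); rewrite (polarC (mul y w) (mul z x)); ring.
Qed.

Definition cconj x := pol x e *: e - x.

Lemma polar_adjl x y z : pol (mul x y) z = pol y (mul (cconj x) z).
Proof.
have h := polar_mull_lin x y e z; rewrite !cmul1l in h.
rewrite /cconj cmulBl cmulZl cmul1l polarBr polarZr.
apply: (@eq_by_combination _ _ _ _ 1 _ h).
by rewrite (polarC (mul x y)) (polarC y (mul x z)); ring.
Qed.
Lemma polar_adjr x y z : pol (mul y x) z = pol y (mul z (cconj x)).
Proof.
have h := polar_mulr_lin x y e z; rewrite !cmul1r in h.
rewrite /cconj cmulBr cmulZr cmul1r polarBr polarZr.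
apply: (@eq_by_combination _ _ _ _ 1 _ h).
by rewrite (polarC (mul y x)) (polarC y (mul z x)); ring.
Qed.

Lemma cconjK x : cconj (cconj x) = x.
Proof.
rewrite /cconj polarBl polarZl polar_ee.
have -> : pol x e * 2%:R - pol x e = pol x e by rewrite mulr_natr mulr2n addrK.
by rewrite opprB addrC subrK.
Qed.

Lemma cconjZ a x : cconj (a *: x) = a *: cconj x.
Proof. by rewrite /cconj polarZl scalerBr scalerA. Qed.

Lemma norm_cconj x : N (cconj x) = N x.
Proof. rewrite /cconj normD normZ normN norm_e polarZl polarNr (polarC e x); ring. Qed.

Lemma cconj_mull x y : mul (cconj x) (mul x y) = N x *: y.
Proof. by apply: polar_inj => z; rewrite polar_adjl cconjK polar_mull polarZl. Qed.
Lemma cconj_mulr x y : mul (mul y x) (cconj x) = N x *: y.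
Proof. by apply: polar_inj => z; rewrite polar_adjr cconjK polar_mulr polarZl mulrC. Qed.

Lemma cmul_sqr x : mul x x = pol x e *: x - N x *: e.
Proof.
have h := cconj_mull x e; rewrite cmul1r /cconj cmulBl cmulZl cmul1l in h.
by rewrite -h opprB addrC subrK.
Qed.
Lemma cmul_sqr_lin x y :
  mul x y + mul y x = pol x e *: y + pol y e *: x - pol x y *: e.
Proof.
have h := cmul_sqr (x + y); rewrite !(cmulDl, cmulDr) cmul_sqr cmul_sqr normD in h.
apply: polar_inj => z.
have hz := congr1 (fun v => pol v z) h; cbv beta in hz.
expand_bilinear; rewrite !(polarDl, polarBl, polarNl, polarZl, polarDr) in hz.
by apply: (@eq_by_combination _ _ _ _ 1 _ hz); ring.
Qed.

Section Doubling.
Context {D : {vspace V}} {a : V}.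
Hypothesis e_in_D : e \in D.
Hypothesis D_mul_closed : forall x y, x \in D -> y \in D -> mul x y \in D.
Hypothesis a_orthoD : forall d, d \in D -> pol d a = 0.

Lemma cconj_in x : x \in D -> cconj x \in D.
Proof. by move=> hx; rewrite /cconj memvB // memvZ. Qed.
Lemma polar_a_e : pol a e = 0. Proof. by rewrite polarC a_orthoD. Qed.
Lemma cconj_a : cconj a = - a. Proof. by rewrite /cconj polar_a_e scale0r add0r. Qed.

Lemma doubling_commute x : x \in D -> mul x a = mul a (cconj x).
Proof.
move=> hx; have h := cmul_sqr_lin x a.
rewrite polar_a_e a_orthoD // !scale0r addr0 subr0 in h.
by rewrite /cconj cmulBr cmulZr cmul1r -h addrK.
Qed.

Lemma doubling_mulr x y : x \in D -> y \in D -> mul x (mul y a) = mul (mul y x) a.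
Proof.
move=> hx hy; apply: polar_inj => z.
have h1 := polar_mull_lin y a (cconj x) z.
have h2 := polar_mull_lin a x y z.
rewrite (doubling_commute _ (cconj_in _ hx)) cconjK in h1.
rewrite (polarC a y) a_orthoD // mul0r in h2.
have h3 := cmul_sqr_lin a z; rewrite polar_a_e scale0r add0r in h3.
have h4 := polar_adjr x y e; rewrite cmul1l in h4.
have h5 : pol (mul y x) a = 0 by rewrite a_orthoD // D_mul_closed.
rewrite polar_adjl [RHS]polar_adjr cconj_a cmulNr polarNr.
have -> : mul z a = (pol z e *: a - pol a z *: e) - mul a z by rewrite -h3 addrC addKr.
rewrite polarBr polarBr !polarZr h5 h4 mulr0 sub0r.
apply: (@eq_by_combination2 _ _ _ _ _ _ 1 (-1) _ h1 h2).
by rewrite (polarC (mul a x)) (polarC a z); ring.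
Qed.

Lemma doubling_mull x y : x \in D -> y \in D -> mul (mul x a) y = mul (mul x (cconj y)) a.
Proof.
move=> hx hy; apply: polar_inj => z.
have h := polar_mulr_lin a x (cconj y) z.
rewrite (polarC a (cconj y)) a_orthoD ?cconj_in // mulr0 in h.
rewrite [LHS]polar_adjr [RHS]polar_adjr cconj_a cmulNr polarNr.
by apply: (@eq_by_combination _ _ _ _ 1 _ h); ring.
Qed.

Lemma doubling_mul_aa y v : y \in D -> v \in D ->
  mul (mul y a) (mul v a) = - N a *: mul (cconj v) y.
Proof.
move=> hy hv; apply: polar_inj => z.
have hva : pol (mul v a) e = 0 by rewrite polar_adjr cmul1l cconj_a polarNr a_orthoD // oppr0.
have hcj : cconj (mul v a) = - mul v a by rewrite /cconj hva scale0r add0r.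
have h1 := polar_mull_lin y a z (mul v a).
rewrite (doubling_mulr _ _ hy hv) polar_mulr in h1.
have h2 := polar_mulr a v e; rewrite cmul1l in h2.
rewrite (polarC a (mul v a)) h2 in h1.
rewrite polar_adjr hcj cmulNr polarNr polarZl /cconj cmulBl cmulZl cmul1l polarBl polarZl.
apply: (@eq_by_combination _ _ _ _ (-1) _ h1).
by rewrite (polarC y z) (polarC (mul v y) z); ring.
Qed.

Lemma doubling_orth y d : y \in D -> d \in D -> pol (mul y a) d = 0.
Proof.
move=> hy hd; have h := polar_mull_lin y a e d; rewrite !cmul1l in h.
by rewrite (polarC a (mul y d)) (a_orthoD _ (D_mul_closed _ _ hy hd)) (polarC a d)
  (a_orthoD _ hd) mulr0 addr0 in h.
Qed.

Lemma doubling_norm x y : x \in D -> y \in D -> N (x + mul y a) = N x + N y * N a.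
Proof. by move=> hx hy; rewrite normD N_mul polarC doubling_orth // addr0. Qed.

Lemma doubling_prod x y u v : x \in D -> y \in D -> u \in D -> v \in D ->
  mul (x + mul y a) (u + mul v a) =
  (mul x u - N a *: mul (cconj v) y) + mul (mul v x + mul y (cconj u)) a.
Proof.
move=> hx hy hu hv.
rewrite cmulDl !cmulDr (doubling_mulr _ _ hx hv) (doubling_mull _ _ hy hu)
  (doubling_mul_aa _ _ hy hv).
by apply: polar_inj => w; expand_bilinear; ring.
Qed.

End Doubling.

Lemma lfun_of_linear (f : V -> V) :
  (forall (a : k) x y, f (a *: x + y) = a *: f x + f y) ->
  exists h : 'End(V), forall x, h x = f x.
Proof.
move=> f_lin.
pose F : {linear V -> V} := HB.pack f (GRing.isLinear.Build k V V *:%R f f_lin).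
by exists (linfun F) => x; rewrite lfunE.
Qed.

Lemma rmul_lfun c : exists h : 'End(V), forall x, h x = mul x c.
Proof. by apply: lfun_of_linear => a x y; rewrite cmulZDl. Qed.

Lemma polar_pres {U : {vspace V}} {f : 'End(V)} :
  (forall x, x \in U -> N (f x) = N x) ->
  forall x y, x \in U -> y \in U -> pol (f x) (f y) = pol x y.
Proof. by move=> hf x y hx hy; rewrite /polar -linearD /= !hf // memvD. Qed.

Lemma isometry_polar {f : 'End(V)} :
  (forall x, N (f x) = N x) -> forall x y, pol (f x) (f y) = pol x y.
Proof. by move=> hf x y; rewrite (@polar_pres fullv f (fun x _ => hf x)) ?memvf. Qed.

Definition reflection (w x : V) := x - (pol x w / N w) *: w.

Lemma reflection_lfun w : exists h : 'End(V), forall x, h x = reflection w x.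
Proof.
apply: lfun_of_linear => a x y; apply: polar_inj => z; rewrite /reflection.
by expand_bilinear; rewrite ?scalerBr ?scalerA; expand_bilinear; ring.
Qed.

Lemma reflection_isometry w x : N w != 0 -> N (reflection w x) = N x.
Proof. by move=> hw; rewrite /reflection normD normN normZ polarNr polarZr; field. Qed.

Lemma reflection_fix w x : pol x w = 0 -> reflection w x = x.
Proof. by move=> h; rewrite /reflection h mul0r scale0r subr0. Qed.

Lemma polar_sub_norm v w : N (v - w) = N v + N w - pol v w.
Proof. rewrite normD normN polarNr; ring. Qed.

(* Two anisotropic vectors of equal norm are exchanged by a product of at
   most two reflections, fixing their common orthogonal. *)
Lemma isometry_move {v w : V} : N v = N w -> N v != 0 ->
  exists rho : 'End(V), [/\ forall x, N (rho x) = N x, rho w = v &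
     forall z, pol z v = 0 -> pol z w = 0 -> rho z = z].
Proof.
move=> Nvw Nv0.
have [Nd|Nd] := eqVneq (N (v - w)) 0; last first.
  have [r hr] := reflection_lfun (v - w); exists r; split.
  - by move=> x; rewrite hr reflection_isometry.
  - rewrite hr; apply: polar_inj => z; rewrite /reflection; expand_bilinear.
    rewrite (polarC w v) polarxx -Nvw; rewrite polar_sub_norm -Nvw in Nd *.
    by field.
  - by move=> z h1 h2; rewrite hr reflection_fix // polarBr h1 h2 subrr.
have Ns : N (v + w) != 0.
  rewrite normD -Nvw; rewrite polar_sub_norm -Nvw in Nd.
  have -> : N v + N v + pol v w = 4%:R * N v - (N v + N v - pol v w) by ring.
  rewrite Nd subr0 mulf_neq0 //.
  by rewrite (_ : 4%:R = 2%:R * 2%:R :> k) ?mulf_neq0 // -natrM.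
have [r1 hr1] := reflection_lfun (v + w); have [r2 hr2] := reflection_lfun v.
exists (r2 \o r1)%VF; split.
- by move=> x; rewrite comp_lfunE hr2 hr1 !reflection_isometry.
- have r1w : reflection (v + w) w = - v.
    apply: polar_inj => z; rewrite /reflection; expand_bilinear.
    rewrite polarxx (polarC w v) normD -Nvw; move: Ns; rewrite normD -Nvw => Ns.
    by field.
  rewrite comp_lfunE hr1 r1w hr2; apply: polar_inj => z; rewrite /reflection.
  by expand_bilinear; rewrite polarxx; field.
- move=> z h1 h2; rewrite comp_lfunE hr1 reflection_fix; last by rewrite polarDr h1 h2 addr0.
  by rewrite hr2 reflection_fix.
Qed.

Definition nondeg_on (U : {vspace V}) :=
  forall x, x \in U -> (forall y, y \in U -> pol x y = 0) -> x = 0.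

Lemma anisotropic_in {U : {vspace V}} :
  nondeg_on U -> U != 0%VS -> exists2 u, u \in U & N u != 0.
Proof.
move=> U_nd Unz; apply: NNPP => no_u.
have N_eq0 y : y \in U -> N y = 0.
  by move=> hy; apply: NNPP => /eqP hy0; apply: no_u; exists y.
move: Unz; rewrite -vpick0 => /eqP; apply; apply: U_nd; first exact: memv_pick.
move=> y hy; rewrite /polar (N_eq0 _ (memvD (memv_pick U) hy)).
by rewrite (N_eq0 _ (memv_pick U)) (N_eq0 _ hy) !subr0.
Qed.

Lemma orthogonal_split {U : {vspace V}} {u : V} : nondeg_on U -> u \in U -> N u != 0 ->
  exists U0 : {vspace V}, [/\ (\dim U0 < \dim U)%N, nondeg_on U0,
    forall x, x \in U0 -> x \in U /\ pol x u = 0 &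
    forall x, x \in U -> x - (pol x u / pol u u) *: u \in U0].
Proof.
move=> U_nd hu Nu0.
have u0 : u != 0 by apply: contraNneq Nu0 => ->; rewrite norm0.
have puu : pol u u != 0 by rewrite polarxx mulf_neq0.
have [l hl] : exists l : 'End(V), forall x, l x = pol x u *: u.
  by apply: lfun_of_linear => a x y; rewrite polarZDl scalerDl scalerA.
have memU0 x : (x \in (U :&: lker l)%VS) = (x \in U) && (pol x u == 0).
  by rewrite memv_cap memv_ker hl scaler_eq0 (negbTE u0) orbF.
have proj x : x \in U -> x - (pol x u / pol u u) *: u \in (U :&: lker l)%VS.
  move=> hx; rewrite memU0 memvB ?memvZ //=; apply/eqP.
  by rewrite polarBl polarZl; field.
exists (U :&: lker l)%VS; split => //.
- rewrite (ltn_leqif (dimv_leqif_eq (capvSl U (lker l)))).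
  by apply/eqP => hE; move: hu puu; rewrite -hE memU0 => /andP [_ /eqP ->]; rewrite eqxx.
- move=> x; rewrite memU0 => /andP [hx /eqP hxu] hy; apply: U_nd => // y hyU.
  by have := hy _ (proj y hyU); rewrite polarBr polarZr hxu mulr0 subr0.
- by move=> x; rewrite memU0 => /andP [-> /eqP].
Qed.

Lemma witt_extension {U : {vspace V}} {sg : 'End(V)} : nondeg_on U ->
  (forall x, x \in U -> N (sg x) = N x) ->
  exists Psi : 'End(V), (forall x, N (Psi x) = N x) /\ (forall x, x \in U -> Psi x = sg x).
Proof.
move: {2}(\dim U) (leqnn (\dim U)) => n; elim: n U => [|n IH] U dimU U_nd sg_iso.
  exists \1%VF; split=> [x|x]; first by rewrite lfunE.
  by move: dimU; rewrite leqn0 dimv_eq0 => /eqP ->; rewrite memv0 => /eqP ->; rewrite !linear0.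
have [->|Unz] := eqVneq U 0%VS.
  exists \1%VF; split=> [x|x]; first by rewrite lfunE.
  by rewrite memv0 => /eqP ->; rewrite !linear0.
have [u hu Nu0] := anisotropic_in U_nd Unz.
have [U0 [dimU0 U0_nd U0_sub proj]] := orthogonal_split U_nd hu Nu0.
have [psi [psi_iso psi_ext]] : exists Psi : 'End(V),
    (forall x, N (Psi x) = N x) /\ (forall x, x \in U0 -> Psi x = sg x).
  apply: IH U0_nd (fun x hx => sg_iso x (U0_sub x hx).1).
  by rewrite -ltnS (leq_trans dimU0 dimU).
have Nsgu : N (sg u) = N (psi u) by rewrite psi_iso sg_iso.
have Nsgu0 : N (sg u) != 0 by rewrite sg_iso.
have [rho [rho_iso rho_u rho_fix]] := isometry_move Nsgu Nsgu0.
exists (rho \o psi)%VF; split=> [x|x hx]; first by rewrite comp_lfunE rho_iso psi_iso.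
move: (pol x u / pol u u) (proj x hx) => c hx0.
have -> : x = (x - c *: u) + c *: u by rewrite subrK.
have [x0U x0u] := U0_sub _ hx0; move: (x - c *: u) hx0 x0U x0u => x0 hx0 x0U x0u.
rewrite comp_lfunE !linearD !linearZ /= rho_u (psi_ext _ hx0) rho_fix //.
  by rewrite (polar_pres sg_iso) // x0u.
by rewrite -(psi_ext _ hx0) isometry_polar.
Qed.

(* A unital multiplicative map, injective on a unital subalgebra U, preserves
   the norm on U: comparing the quadratic equations satisfied by x and f(x)
   shows that either N(f x) = N(x) or x is a multiple of e. *)
Lemma subalg_hom_norm {U : {vspace V}} {f : 'End(V)} :
  e \in U -> (forall x y, x \in U -> y \in U -> mul x y \in U) ->
  (forall x y, x \in U -> y \in U -> f (mul x y) = mul (f x) (f y)) ->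
  (forall x, x \in U -> f x = 0 -> x = 0) -> f e = e ->
  forall x, x \in U -> N (f x) = N x.
Proof.
move=> eU U_mul f_mul f_inj fe x hx.
have hsq := f_mul x x hx hx; rewrite cmul_sqr [RHS]cmul_sqr linearB !linearZ /= fe in hsq.
have lin_dep : (pol x e - pol (f x) e) *: f x = (N x - N (f x)) *: e.
  apply: polar_inj => z; have hz := congr1 (fun v => pol v z) hsq; cbv beta in hz.
  rewrite ?scalerN in hz; expand_bilinear; rewrite !(polarBl, polarNl, polarZl) in hz.
  by apply: (@eq_by_combination _ _ _ _ 1 _ hz); ring.
have [T0|Tnz] := eqVneq (pol x e - pol (f x) e) 0.
  move: lin_dep; rewrite T0 scale0r => /esym/eqP; rewrite scaler_eq0 (negbTE e_neq0) orbF.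
  by rewrite subr_eq0 => /eqP.
set c := (N x - N (f x)) / (pol x e - pol (f x) e).
have fx : f x = c *: e by rewrite /c mulrC -scalerA -lin_dep scalerA mulVf // scale1r.
have : x - c *: e = 0.
  by apply: f_inj; rewrite ?memvB ?memvZ // linearB linearZ /= fe fx subrr.
by move/eqP; rewrite subr_eq0 => /eqP ->; rewrite linearZ /= fe.
Qed.

Section Automorphism.
Context {f : 'End(V)} (f_aut : is_aut mul f).

Lemma aut_e : f e = e.
Proof.
case: f_aut => [[g _ gK] f_mul].
have fe_unit y : mul (f e) y = y by rewrite -[y]gK -f_mul cmul1l.
by rewrite -[f e]cmul1r fe_unit.
Qed.

Lemma aut_inj0 x : f x = 0 -> x = 0.
Proof. by case: f_aut => f_bij _ fx; apply: (bij_inj f_bij); rewrite fx linear0. Qed.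

Lemma aut_norm x : N (f x) = N x.
Proof.
apply: (@subalg_hom_norm fullv f); rewrite ?memvf //.
- by move=> y z _ _; rewrite memvf.
- by move=> y z _ _; case: f_aut.
- by move=> y _; apply: aut_inj0.
- exact: aut_e.
Qed.

Lemma aut_polar x y : pol (f x) (f y) = pol x y.
Proof. exact: isometry_polar aut_norm x y. Qed.

Lemma aut_cconj x : f (cconj x) = cconj (f x).
Proof. by rewrite /cconj linearB linearZ /= -[in RHS]aut_e aut_polar. Qed.

End Automorphism.

(* The projections onto the eigenspaces of an involution t, and the
   coordinate along a in the decomposition V = Fix(t) + Fix(t) a. *)
Definition fixed_proj (t : 'End(V)) : 'End(V) := (2%:R^-1 *: (\1 + t))%VF.
Definition anti_proj (t : 'End(V)) : 'End(V) := (2%:R^-1 *: (\1 - t))%VF.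
Definition a_coord (t : 'End(V)) (a z : V) := (N a)^-1 *: mul (anti_proj t z) (cconj a).

Lemma fixed_projE t z : fixed_proj t z = 2%:R^-1 *: (z + t z).
Proof. by rewrite /fixed_proj scale_lfunE add_lfunE id_lfunE. Qed.
Lemma anti_projE t z : anti_proj t z = 2%:R^-1 *: (z - t z).
Proof. by rewrite /anti_proj scale_lfunE add_lfunE opp_lfunE id_lfunE. Qed.

Lemma half_double (v : V) : 2%:R^-1 *: (v + v) = v.
Proof. by rewrite -mulr2n -scaler_nat scalerA mulVf // scale1r. Qed.

Lemma proj_sum t z : z = fixed_proj t z + anti_proj t z.
Proof. by rewrite fixed_projE anti_projE -scalerDr addrACA subrr addr0 half_double. Qed.

Lemma doubling_decomp t a : N a != 0 ->
  forall z, z = fixed_proj t z + mul (a_coord t a z) a.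
Proof.
move=> Na_neq0 z; have := cconj_mulr (cconj a) (anti_proj t z).
rewrite cconjK norm_cconj => h.
by rewrite cmulZl h scalerA mulVf // scale1r -proj_sum.
Qed.

Section Involution.
Context {t : 'End(V)} (t_order2 : aut_order2 mul t).

Local Notation D := (fixedSpace t).

Lemma inv_aut : is_aut mul t. Proof. by case: t_order2. Qed.
Lemma inv_mul x y : t (mul x y) = mul (t x) (t y). Proof. by case: inv_aut => _ ->. Qed.
Lemma invK x : t (t x) = x.
Proof. by case: t_order2 => _ [/lfunP/(_ x)]; rewrite comp_lfunE id_lfunE. Qed.

Lemma inv_e_fixed : e \in D. Proof. by apply/fixedSpaceP; apply: aut_e inv_aut. Qed.
Lemma inv_fixed_mul x y : x \in D -> y \in D -> mul x y \in D.
Proof.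
by move=> /fixedSpaceP hx /fixedSpaceP hy; apply/fixedSpaceP; rewrite inv_mul hx hy.
Qed.

(* The two eigenspaces are orthogonal (t is an isometry and 2 <> 0). *)
Lemma inv_fixed_anti_orth {x y : V} : x \in D -> t y = - y -> pol x y = 0.
Proof.
move=> /fixedSpaceP hx hy.
have h : pol x y = - pol x y by rewrite -{1}(aut_polar inv_aut x y) hx hy polarNr.
have : 2%:R * pol x y = 0 by rewrite mulr_natl mulr2n {1}h addNr.
by move/eqP; rewrite mulf_eq0 (negbTE two_neq0) => /eqP.
Qed.

Lemma fixed_proj_in z : fixed_proj t z \in D.
Proof. by apply/fixedSpaceP; rewrite fixed_projE linearZ linearD /= invK addrC. Qed.
Lemma anti_proj_anti z : t (anti_proj t z) = - anti_proj t z.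
Proof. by rewrite anti_projE linearZ linearB /= invK -scalerN opprB. Qed.

Lemma proj_split {x w : V} : x \in D -> t w = - w ->
  fixed_proj t (x + w) = x /\ anti_proj t (x + w) = w.
Proof.
move=> /fixedSpaceP hx hw; rewrite fixed_projE anti_projE (linearD t) /= hx hw.
by rewrite opprD opprK addrACA subrr addr0 addrACA subrr add0r !half_double.
Qed.

(* N is nondegenerate on D, since V is the orthogonal sum of the eigenspaces. *)
Lemma inv_fixed_nondeg : nondeg_on D.
Proof.
move=> x hx hy; apply: N_nondeg => z.
rewrite (proj_sum t z) polarDr hy ?fixed_proj_in //.
by rewrite (inv_fixed_anti_orth hx (anti_proj_anti z)) addr0.
Qed.

Lemma orth_fixed_anti {y : V} : (forall d, d \in D -> pol d y = 0) -> t y = - y.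
Proof.
move=> hy; suff: fixed_proj t y = 0.
  rewrite fixed_projE => /eqP; rewrite scaler_eq0 invr_eq0 (negbTE two_neq0) addr_eq0.
  by move=> /eqP {2}->; rewrite opprK.
apply: N_nondeg => z; rewrite (proj_sum t z) polarDr.
rewrite (inv_fixed_anti_orth (fixed_proj_in y) (anti_proj_anti z)) addr0.
have := congr1 (fun v => pol v (fixed_proj t z)) (proj_sum t y); cbv beta.
rewrite polarDl (polarC y) hy ?fixed_proj_in // (polarC (anti_proj t y)).
by rewrite (inv_fixed_anti_orth (fixed_proj_in z) (anti_proj_anti y)) addr0 => <-.
Qed.

(* Since t <> 1, the (-1)-eigenspace is not totally isotropic. *)
Lemma anti_anisotropic : exists a, t a = - a /\ N a != 0.
Proof.
apply: NNPP => no_a.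
have N_eq0 y : t y = - y -> N y = 0.
  by move=> hy; apply: NNPP => /eqP hy0; apply: no_a; exists y.
case: t_order2 => _ [_]; apply/negP; rewrite negbK; apply/eqP/lfunP => x.
suff: anti_proj t x = 0.
  rewrite anti_projE id_lfunE => /eqP.
  by rewrite scaler_eq0 invr_eq0 (negbTE two_neq0) subr_eq0 => /eqP.
apply: N_nondeg => z; rewrite (proj_sum t z) polarDr polarC.
rewrite (inv_fixed_anti_orth (fixed_proj_in z) (anti_proj_anti x)) add0r.
rewrite /polar !N_eq0 ?subrr ?anti_proj_anti //.
by rewrite linearD /= !anti_proj_anti opprD.
Qed.

Section DoublingCoordinates.
Context {a : V}.
Hypotheses (a_anti : t a = - a) (Na_neq0 : N a != 0).

Lemma inv_orth_a d : d \in D -> pol d a = 0.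
Proof. by move=> hd; apply: inv_fixed_anti_orth. Qed.

Lemma inv_mul_anti {y : V} : y \in D -> t (mul y a) = - mul y a.
Proof. by move=> /fixedSpaceP hy; rewrite inv_mul hy a_anti cmulNr. Qed.

Lemma a_coord_in z : a_coord t a z \in D.
Proof.
have cconj_anti : t (cconj a) = - cconj a.
  by rewrite (aut_cconj inv_aut) a_anti -scaleN1r cconjZ scaleN1r.
by apply/fixedSpaceP; rewrite linearZ /= inv_mul anti_proj_anti cconj_anti cmulNl cmulNr opprK.
Qed.

Lemma doubling_coords {x y : V} : x \in D -> y \in D ->
  fixed_proj t (x + mul y a) = x /\ a_coord t a (x + mul y a) = y.
Proof.
move=> hx hy; rewrite /a_coord; have [-> ->] := proj_split hx (inv_mul_anti hy).
by rewrite cconj_mulr scalerA mulVf // scale1r.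
Qed.

End DoublingCoordinates.
End Involution.

Section Extension.
Context {s t phi : 'End(V)} {a a' : V}.
Hypotheses (s_order2 : aut_order2 mul s) (t_order2 : aut_order2 mul t).
Local Notation D := (fixedSpace t).
Local Notation D' := (fixedSpace s).
Hypotheses (phi_img : (phi @: D)%VS = D')
  (phi_inj : forall x, x \in D -> phi x = 0 -> x = 0)
  (phi_mul : forall x y, x \in D -> y \in D -> phi (mul x y) = mul (phi x) (phi y))
  (phi_e : phi e = e).
Hypotheses (a_anti : t a = - a) (Na_neq0 : N a != 0)
  (a'_orth : forall d, d \in D' -> pol d a' = 0) (Na' : N a' = N a).

Lemma phi_in {x : V} : x \in D -> phi x \in D'.
Proof. by move=> hx; rewrite -phi_img memv_img. Qed.

Lemma phi_norm x : x \in D -> N (phi x) = N x.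
Proof.
move: x; exact: subalg_hom_norm (inv_e_fixed t_order2) (inv_fixed_mul t_order2)
  phi_mul phi_inj phi_e.
Qed.

Lemma phi_cconj x : x \in D -> phi (cconj x) = cconj (phi x).
Proof.
move=> hx; rewrite /cconj linearB linearZ /= phi_e -[in RHS]phi_e.
by rewrite (polar_pres phi_norm) ?phi_e ?(inv_e_fixed t_order2).
Qed.

Lemma extension_map : exists g : 'End(V),
  forall x y, x \in D -> y \in D -> g (x + mul y a) = phi x + mul (phi y) a'.
Proof.
have [Ra' Ra'E] := rmul_lfun a'; have [Rca Rca_E] := rmul_lfun (cconj a).
exists ((phi \o fixed_proj t) + (Ra' \o (phi \o (((N a)^-1 *: Rca) \o anti_proj t))))%VF.
move=> x y hx hy; have [fx ay] := doubling_coords t_order2 a_anti Na_neq0 hx hy.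
by rewrite add_lfunE !comp_lfunE fx Ra'E scale_lfunE Rca_E -[(N a)^-1 *: _]/(a_coord t a _) ay.
Qed.

Context {g : 'End(V)}.
Hypothesis gE : forall x y, x \in D -> y \in D -> g (x + mul y a) = phi x + mul (phi y) a'.

Let D_doubling := doubling_prod (inv_e_fixed t_order2) (inv_fixed_mul t_order2)
  (inv_orth_a t_order2 a_anti).
Let D'_doubling := doubling_prod (inv_e_fixed s_order2) (inv_fixed_mul s_order2) a'_orth.

(* g is multiplicative: both sides follow the doubling formula. *)
Lemma extension_mul z1 z2 : g (mul z1 z2) = mul (g z1) (g z2).
Proof.
have inD := inv_fixed_mul t_order2; have cconjD := cconj_in (inv_e_fixed t_order2).
rewrite (doubling_decomp t a Na_neq0 z1) (doubling_decomp t a Na_neq0 z2).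
move: (fixed_proj_in t_order2 z1) (a_coord_in t_order2 a_anti z1)
      (fixed_proj_in t_order2 z2) (a_coord_in t_order2 a_anti z2).
move: (fixed_proj t z1) (a_coord t a z1) (fixed_proj t z2) (a_coord t a z2) => x y u v hx hy hu hv.
rewrite D_doubling // !gE ?memvB ?memvD ?memvZ ?inD ?cconjD //.
rewrite D'_doubling ?phi_in // linearB linearZ linearD /=.
by rewrite !phi_mul ?cconjD // !phi_cconj // Na'.
Qed.

(* g is an isometry: both sides follow the doubling formula for N. *)
Lemma extension_norm z : N (g z) = N z.
Proof.
rewrite (doubling_decomp t a Na_neq0 z).
move: (fixed_proj_in t_order2 z) (a_coord_in t_order2 a_anti z).
move: (fixed_proj t z) (a_coord t a z) => x y hx hy.
rewrite gE // (doubling_norm (inv_fixed_mul s_order2) a'_orth) ?phi_in // !phi_norm // Na'.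
by rewrite (doubling_norm (inv_fixed_mul t_order2) (inv_orth_a t_order2 a_anti)).
Qed.

(* An injective endomorphism of a finite-dimensional space is bijective. *)
Lemma extension_aut : is_aut mul g.
Proof.
have g_inj : lker g == 0%VS.
  apply/lker0P => x y gxy; apply: polar_inj => w; apply/eqP; rewrite -subr_eq0.
  by rewrite -polarBl -(isometry_polar extension_norm) linearB /= gxy subrr polar0l.
split; last exact: extension_mul.
exact: Bijective (lker0_lfunK g_inj) (lker0_lfunVK g_inj).
Qed.

(* s g = g t: compare both sides on x + y a, where t acts by x - y a and s
   acts by phi(x) - phi(y) a'. *)
Lemma extension_intertwines : (s \o g = g \o t)%VF.
Proof.
have s_a' : s a' = - a' := orth_fixed_anti s_order2 a'_orth.
apply/lfunP => z; rewrite !comp_lfunE (doubling_decomp t a Na_neq0 z).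
move: (fixed_proj_in t_order2 z) (a_coord_in t_order2 a_anti z).
move: (fixed_proj t z) (a_coord t a z) => x y hx hy.
rewrite (linearD t) /= (fixedSpaceP hx) (inv_mul_anti t_order2 a_anti hy) -cmulNl.
rewrite !gE ?memvN // (linearD s) /= (fixedSpaceP (phi_in hx)) (inv_mul s_order2).
by rewrite (fixedSpaceP (phi_in hy)) s_a' cmulNr linearN /= cmulNl.
Qed.

End Extension.

Section Conjugacy.
Context {s t : 'End(V)}.
Hypotheses (s_order2 : aut_order2 mul s) (t_order2 : aut_order2 mul t).
Local Notation D := (fixedSpace t).
Local Notation D' := (fixedSpace s).

Lemma iso_of_conj : conj_in_Aut mul s t -> alg_iso mul e D D'.
Proof.
case=> g [g_aut /lfunP sg_gt]; have [[h gK hK] g_mul] := g_aut.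
have sg x : s (g x) = g (t x) by have := sg_gt x; rewrite !comp_lfunE.
exists g; split.
- apply/vspaceP => y; apply/memv_imgP/fixedSpaceP => [[x /fixedSpaceP tx ->]|sy].
    by rewrite sg tx.
  exists (h y) => //; apply/fixedSpaceP; apply: (bij_inj g_aut.1).
  by rewrite -sg hK.
- by move=> x _; apply: aut_inj0.
- by move=> x y _ _; apply: g_mul.
- exact: aut_e.
Qed.

Lemma conj_of_iso : alg_iso mul e D D' -> conj_in_Aut mul s t.
Proof.
case=> phi [phi_img phi_inj phi_mul phi_e].
have phi_N := phi_norm t_order2 phi_inj phi_mul phi_e.
have [Phi [Phi_iso Phi_ext]] := witt_extension (inv_fixed_nondeg t_order2) phi_N.
have [a [a_anti Na_neq0]] := anti_anisotropic t_order2.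
have a'_orth d : d \in D' -> pol d (Phi a) = 0.
  rewrite -phi_img => /memv_imgP [x hx ->].
  by rewrite -(Phi_ext x hx) (isometry_polar Phi_iso) (inv_orth_a t_order2 a_anti).
have [g gE] := extension_map (phi := phi) (a' := Phi a) t_order2 a_anti Na_neq0.
exists g; split.
- exact: (extension_aut s_order2 t_order2 phi_img phi_inj phi_mul phi_e a_anti Na_neq0
    a'_orth (Phi_iso a) gE).
- exact: (extension_intertwines s_order2 t_order2 phi_img a_anti Na_neq0 a'_orth gE).
Qed.

End Conjugacy.
End CompositionAlgebra.

Theorem mainTheorem2 (k : fieldType) (V : vectType k)
    (mul : V -> V -> V) (e : V) (N : V -> k)
    (hchar : (2%:R : k) != 0)
    (hC : octonion_algebra mul e N)
    (s t : 'End(V)) (hs : aut_order2 mul s) (ht : aut_order2 mul t) :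
  conj_in_Aut mul s t <-> alg_iso mul e (fixedSpace t) (fixedSpace s).
Proof.
case: hC => [[mul_bil mul_unit N_quad N_nondeg N_mul] dimV].
have V_nontrivial : exists x : V, x != 0.
  exists (vpick fullv); rewrite vpick0; apply/eqP => V0.
  by move: dimV; rewrite V0 dimv0.
split; first exact: iso_of_conj.
exact: (conj_of_iso hchar mul_bil mul_unit N_quad N_nondeg N_mul V_nontrivial hs ht).
Qed.
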